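(* Let $r\geqslant 1$ and $n\geqslant 2r$. There exists $\pi\in\mathrm{Sym}_n$ with $w_H(\pi)=2r$ all of whose non-trivial cycles have length $2$ or $3$, such that $I(n,2r,r)=|B_r(\pi)\cap B_r(I_n)|$.
   Context: $\mathrm{Sym}_n$ is the symmetric group on $[n]$, $I_n$ is the identity, $d$ is the Hamming distance $d(\pi,\tau)=|\{i:\pi(i)\neq\tau(i)\}|$, $w_H(\pi)=d(I_n,\pi)$, and $B_r(\pi)=\{\sigma:d(\sigma,\pi)\leqslant r\}$. $I(n,d,r)=\max_{\pi,\tau,\ d(\pi,\tau)=d}|B_r(\pi)\cap B_r(\tau)|$. *)

From mathcomp Require Import all_boot all_order all_fingroup.
Set Implicit Arguments. Unset Strict Implicit. Unset Printing Implicit Defensive.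

Definition hdist (n : nat) (p t : {perm 'I_n}) : nat := #|[set i | p i != t i]|.

Definition wH (n : nat) (p : {perm 'I_n}) : nat := hdist 1 p.

Definition ball (n : nat) (p : {perm 'I_n}) (r : nat) : {set {perm 'I_n}} :=
  [set s | hdist s p <= r].

Definition Inter (n d r : nat) : nat :=
  \max_(p : {perm 'I_n}) \max_(t : {perm 'I_n} | hdist p t == d)
     #|ball p r :&: ball t r|.

From mathcomp Require Import all_boot all_order all_fingroup zify.
Set Implicit Arguments. Unset Strict Implicit. Unset Printing Implicit Defensive.

(* For q of weight 2r, a permutation s in B_r(q) ∩ B_r(I_n) moves exactly r
   points and agrees with q on them: s is the restriction of q to a q-invariant
   r-subset of the support of q, so |B_r(q) ∩ B_r(I_n)| counts such subsets.
   Multiplying by a transposition splits a cycle of length at least 4 without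
   changing the support and only creates invariant sets, so every q refines to
   a p with cycles of length 2 or 3 and an intersection at least as large.
   As the Hamming metric is right-invariant, I(n,2r,r) is the maximum of
   |B_r(q) ∩ B_r(I_n)| over q of weight 2r; refining a maximiser concludes. *)

Section PermSupport.
Local Open Scope group_scope.
Variable T : finType.
Implicit Types (p q s : {perm T}) (X : {set T}).

Definition supp s := [set x | s x != x].

Definition stable_subsets q (r : nat) : {set {set T}} :=
  [set X : {set T} | [&& X \subset supp q, #|X| == r & q \in 'N(X | 'P)]].

Lemma astabs_perm X p : {in X, forall x, p x \in X} -> p \in 'N(X | 'P).
Proof. by move=> pX; rewrite !inE; apply/subsetP => x /pX; rewrite inE. Qed.

Lemma astabs_supp s : s \in 'N(supp s | 'P).
Proof. by apply: astabs_perm => x; rewrite !inE (inj_eq perm_inj). Qed.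

Lemma tperm_astabs X x y : (x \in X) = (y \in X) -> tperm x y \in 'N(X | 'P).
Proof.
by move=> xy; apply/astabsP => z; rewrite /= apermE; case: tpermP => [->|->|].
Qed.

Lemma supp_restr_perm X p :
  p \in 'N(X | 'P) -> supp (restr_perm X p) = X :&: supp p.
Proof.
move=> pX; apply/setP => x; rewrite !inE.
have [xX|xNX] := boolP (x \in X); first by rewrite restr_permE.
by rewrite (out_perm (restr_perm_on X p)) ?eqxx.
Qed.

Lemma restr_perm_neq X p :
  p \in 'N(X | 'P) -> [set x | restr_perm X p x != p x] = supp p :\: X.
Proof.
move=> pX; apply/setP => x; rewrite !inE.
have [xX|xNX] := boolP (x \in X); first by rewrite restr_permE ?eqxx.
by rewrite (out_perm (restr_perm_on X p)) // eq_sym.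
Qed.

Lemma card_porbit_gt1 s x : s x != x -> 1 < #|porbit s x|.
Proof.
move=> sx; move: (iter_porbit s x) (card_porbit_neq0 s x).
by case: #|_| => [|[|k]] //= /eqP; rewrite (negPf sx).
Qed.

Lemma card_porbit_gt3 s x : 3 < #|porbit s x| ->
  [/\ s x != x, s (s x) != x & s (s (s x)) != x].
Proof.
move: (uniq_traject_porbit s x); case: #|_| => [|[|[|[|k]]]] //= /andP[+ _] _.
by rewrite !inE !negb_or ![x == _]eq_sym => /and4P[].
Qed.

Lemma split_long_cycle q z : 3 < #|porbit q z| ->
  exists q', [/\ supp q' = supp q,
    forall X, q \in 'N(X | 'P) -> q' \in 'N(X | 'P)
    & #|porbits q'| = #|porbits q|.+1].
Proof.
(* With y = q^2 z, the product (y z) q splits the 2-cycle (q z  y) off the cycle of z. *)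
case/card_porbit_gt3 => [qz q2z q3z]; set y := q (q z).
have yz : y \in porbit q z by have := mem_porbit q 2 z; rewrite expgSr expg1 permM.
exists (tperm y z * q); split.
- apply/setP => x; rewrite !inE permM.
  case: tpermP => [->|->|_ _] //; last by rewrite qz q3z.
  by rewrite !(inj_eq perm_inj) eq_sym qz.
- move=> X qX; rewrite groupM // tperm_astabs //.
  by rewrite /y !(astabs_act _ qX).
- by have := porbits_mul_tperm q y z; rewrite yz q2z /= addn0 addn1.
Qed.

Definition short_cycles p :=
  forall x, p x != x -> #|porbit p x| = 2 \/ #|porbit p x| = 3.

Lemma short_cycle_refinement q : exists p,
  [/\ supp p = supp q, forall X, q \in 'N(X | 'P) -> p \in 'N(X | 'P)
    & short_cycles p].
Proof.
have [k] := ubnP (#|T| - #|porbits q|); elim: k q => // k IH q /ltnSE bound.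
have [z long | short] := pickP (fun z => 3 < #|porbit q z|).
  have [q' [supp' stable' card']] := split_long_cycle long.
  have [|p [suppp stablep shortp]] := IH q'.
    have : #|porbits q'| <= #|T| by apply: leq_imset_card.
    lia.
  by exists p; split=> [|X /stable'/stablep|]; rewrite ?suppp.
exists q; split => // x qx; have := card_porbit_gt1 qx; have := short x; lia.
Qed.

Lemma card_stable_subsets_refine p q r : supp p = supp q ->
  (forall X, q \in 'N(X | 'P) -> p \in 'N(X | 'P)) ->
  #|stable_subsets q r| <= #|stable_subsets p r|.
Proof.
move=> suppp stable; apply/subset_leq_card/subsetP => X.
by rewrite ![X \in stable_subsets _ _]inE suppp => /and3P[-> -> /stable].
Qed.

End PermSupport.

Section HammingBalls.
Variable n : nat.
Implicit Types (p q s t u : {perm 'I_n}) (X : {set 'I_n}).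

Lemma hdistC p t : hdist p t = hdist t p.
Proof. by apply: eq_card => i; rewrite !inE eq_sym. Qed.

Lemma hdist_mulr s u t : hdist (s * t)%g (u * t)%g = hdist s u.
Proof. by apply: eq_card => i; rewrite !inE !permM (inj_eq perm_inj). Qed.

Lemma hdist1 s : hdist s 1 = #|supp s|.
Proof. by apply: eq_card => i; rewrite !inE perm1. Qed.

Lemma wH_supp s : wH s = #|supp s|.
Proof. by rewrite /wH hdistC hdist1. Qed.

Lemma ball_inter_restr q s r : #|supp q| = 2 * r -> s \in ball q r :&: ball 1 r ->
  [/\ #|supp s| = r, q \in 'N(supp s | 'P)%g & s = restr_perm (supp s) q].
Proof.
move=> suppq /setIP[sq s1]; rewrite inE in sq; rewrite inE hdist1 in s1.
set A := [set i | s i != q i]; have {}sq : #|A| <= r := sq.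
have : supp q \subset A :|: supp s.
  apply/subsetP => i; rewrite !inE.
  by case: (eqVneq (s i) (q i)) => [->|].
move/subset_leq_card; rewrite suppq => cover.
have [disj cards] : #|A :&: supp s| = 0 /\ #|supp s| = r.
  by have := cardsUI A (supp s); lia.
have agree x : x \in supp s -> q x = s x.
  move: disj => /cards0_eq/setP/(_ x); rewrite !inE => + sx.
  by rewrite sx andbT => /negbFE/eqP.
have qs : q \in 'N(supp s | 'P)%g.
  by apply: astabs_perm => x sx; rewrite agree // (astabs_act _ (astabs_supp s)).
split=> //.
apply/permP => x; have [sx|sNx] := boolP (x \in supp s).
  by rewrite restr_permE // agree.
by rewrite (out_perm (restr_perm_on _ _)) //; move: sNx; rewrite inE negbK => /eqP.
Qed.

Lemma card_ball_inter q r : #|supp q| = 2 * r ->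
  #|ball q r :&: ball 1 r| = #|stable_subsets q r|.
Proof.
move=> suppq.
have restr_in X : X \in stable_subsets q r ->
    restr_perm X q \in ball q r :&: ball 1 r.
  rewrite inE => /and3P[Xq /eqP cardX qX].
  rewrite !inE hdist1 supp_restr_perm // (setIidPl Xq) cardX leqnn andbT.
  by rewrite /hdist restr_perm_neq // cardsD (setIidPr Xq) suppq cardX; lia.
have -> : stable_subsets q r = (@supp _) @: (ball q r :&: ball 1 r).
  apply/setP => X; apply/idP/imsetP => [XS | [s /(ball_inter_restr suppq)]].
    exists (restr_perm X q); first exact: restr_in.
    by move: XS; rewrite inE => /and3P[Xq _ qX]; rewrite supp_restr_perm ?(setIidPl Xq).
  move=> [cards qs srestr] ->; rewrite inE cards eqxx qs andbT.
  by rewrite {1}srestr supp_restr_perm ?subsetIr.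
rewrite card_in_imset // => s1 s2.
move=> /(ball_inter_restr suppq) [_ _ e1] /(ball_inter_restr suppq) [_ _ e2] e.
by rewrite e1 e2 e.
Qed.

Lemma card_ball_inter_mulr q u t r :
  #|ball (q * t)%g r :&: ball (u * t)%g r| = #|ball q r :&: ball u r|.
Proof.
rewrite -[RHS](card_preimset _ (mulIg t^-1%g)); apply: eq_card => s.
by rewrite !inE -(hdist_mulr _ q t) -(hdist_mulr _ u t) !mulgKV.
Qed.

Lemma Inter_max_weight d r :
  Inter n d r = \max_(q : {perm 'I_n} | wH q == d) #|ball q r :&: ball 1 r|.
Proof.
apply/eqP; rewrite eqn_leq; apply/andP; split.
  apply/bigmax_leqP => q _; apply/bigmax_leqP => t /eqP qt.
  rewrite -(card_ball_inter_mulr q t t^-1%g) mulgV; apply: leq_bigmax_cond.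
  by rewrite /wH hdistC -(mulgV t) hdist_mulr qt.
apply/bigmax_leqP => q /eqP wq; apply: leq_trans (leq_bigmax q).
by apply: leq_bigmax_cond; rewrite hdistC; apply/eqP.
Qed.

Lemma exists_perm_wH r : 2 * r <= n -> exists q : {perm 'I_n}, wH q = 2 * r.
Proof.
move=> rn.
pose f i := if i < r then i + r else if i < 2 * r then i - r else i.
have f_lt i : i < n -> f i < n by rewrite /f; do ![case: ifP]; lia.
pose g (i : 'I_n) := Ordinal (f_lt i (ltn_ord i)).
have gK : involutive g by move=> i; apply: val_inj; rewrite /= /f; do ![case: ifP]; lia.
exists (perm (inv_inj gK)); rewrite wH_supp.
have -> : supp (perm (inv_inj gK)) = widen_ord rn @: [set: 'I_(2 * r)].
  apply/setP => i; rewrite inE permE -(inj_eq val_inj) /=.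
  apply/idP/imsetP => [fi | [j _ ->] /=].
    have ilt : i < 2 * r by move: fi; rewrite /f; do ![case: ifP]; lia.
    by exists (Ordinal ilt); [rewrite inE | apply: val_inj].
  by have := ltn_ord j; rewrite /f; do ![case: ifP]; lia.
by rewrite card_imset ?cardsT ?card_ord // => j k [] /val_inj.
Qed.
End HammingBalls.

Theorem lemma9 (r n : nat) (hr : 1 <= r) (hn : 2 * r <= n) :
  exists p : {perm 'I_n},
    [/\ wH p = 2 * r,
        (forall x : 'I_n, p x != x -> #|porbit p x| = 2 \/ #|porbit p x| = 3)
      & Inter n (2 * r) r = #|ball p r :&: ball 1 r| ].
Proof.
pose F (q : {perm 'I_n}) := #|ball q r :&: ball 1 r|.
have [q0 wq0] := exists_perm_wH hn.
have [|q /eqP wq maxq] := eq_bigmax_cond F (_ : 0 < #|[pred q | wH q == 2 * r]|).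
  by apply/card_gt0P; exists q0; rewrite inE wq0.
have Inter_q : Inter n (2 * r) r = F q by rewrite Inter_max_weight; exact: maxq.
have [p [suppp stable short]] := short_cycle_refinement q.
have wp : wH p = 2 * r by rewrite wH_supp suppp -wH_supp.
exists p; split=> //.
apply/eqP; rewrite eqn_leq; apply/andP; split.
  rewrite Inter_q /F !card_ball_inter -?wH_supp //.
  exact: card_stable_subsets_refine.
by rewrite Inter_max_weight; apply: leq_bigmax_cond; rewrite wp.
Qed.
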